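(* Let $0<s_1<s_2$, $m\ge 2$, $N=4m+1$, and let $\mathcal C\in\mathbb R^{N\times N}$ be the defect capacitance matrix. For a square matrix $M$ write $\chi_M(x)=\det(xI-M)$, and put $z=x-\alpha$. Then $$\chi_{\mathcal C}(x)=\chi_{A_{2m}^{(\beta_2,0)}(\alpha,\beta_1,\beta_2)}(x)\cdot\Big(\big[(z-\beta_1)P_m^*(x)+\big(\beta_2(\beta_1-\beta_2)z-\beta_2\beta_1^2-(\beta_1-\beta_2)\beta_2^2\big)P_{m-1}^*(x)\big]-\beta_2^2\big[(z-\beta_2)P_{m-1}^*(x)-\beta_2\beta_1^2P_{m-2}^*(x)\big]\Big).$$ Equivalently, $\chi_{\mathcal C}=\chi_{A_{2m+1}^{(\beta_2,\beta_1-\beta_2)}(\alpha,\beta_1,\beta_2)}\,\chi_{A_{2m}^{(0,\beta_2)}(\alpha,\beta_1,\beta_2)}-\beta_2^2\,\chi_{A_{2m}^{(\beta_2,0)}(\alpha,\beta_1,\beta_2)}\,\chi_{A_{2m-1}^{(0,\beta_2)}(\alpha,\beta_2,\beta_1)}$, where the matrices $A_{2m}^{(0,\beta_2)}(\alpha,\beta_1,\beta_2)$ and $A_{2m}^{(\beta_2,0)}(\alpha,\beta_1,\beta_2)$ have the same characteristic polynomial.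
   Context: Set $\alpha=\frac1{s_1}+\frac1{s_2}$, $\beta_1=-\frac1{s_1}$, $\beta_2=-\frac1{s_2}$, $\eta=\frac{2}{s_2}$. The defect capacitance matrix $\mathcal C=\mathcal C_N$ ($N=4m+1$) is the real symmetric tridiagonal matrix with diagonal entries $\mathcal C_{11}=\mathcal C_{NN}=\frac1{s_1}$, $\mathcal C_{2m+1,2m+1}=\eta$, and $\mathcal C_{ii}=\alpha$ otherwise, and off-diagonal entries $\mathcal C_{i,i+1}=\mathcal C_{i+1,i}$ equal to $\beta_1$ for $i$ odd and $\beta_2$ for $i$ even when $1\le i\le 2m$, and equal to $\beta_2$ for $i$ odd and $\beta_1$ for $i$ even when $2m+1\le i\le 4m$. (It is the capacitance matrix of $4m+1$ resonators whose spacings alternate $s_1,s_2,\dots$ up to the centre resonator and are mirrored afterwards.) For reals $\alpha,\beta_1,\beta_2,a,b$: $A_{2k+1}^{(a,b)}(\alpha,\beta_1,\beta_2)\in\mathbb R^{(2k+1)\times(2k+1)}$ is the symmetric tridiagonal matrix with diagonal $(\alpha+a,\alpha,\dots,\alpha,\alpha+b)$ and $(i,i+1)$ off-diagonal entries $\beta_1$ for $i$ odd, $\beta_2$ for $i$ even ($1\le i\le 2k$); $A_{2k}^{(a,b)}(\alpha,\beta_1,\beta_2)\in\mathbb R^{2k\times 2k}$ is defined in the same way with size $2k$ (first and last off-diagonal entries $\beta_1$). With $U_k$ the Chebyshev polynomials of the second kind, $P_k^*(x):=(\beta_1\beta_2)^kU_k\!\Big(\frac{(x-\alpha)^2-\beta_1^2-\beta_2^2}{2\beta_1\beta_2}\Big)$.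 *)

From HB Require Import structures.
From mathcomp Require Import all_boot all_order all_algebra.
Set Implicit Arguments. Unset Strict Implicit. Unset Printing Implicit Defensive.
Import Order.TTheory GRing.Theory Num.Theory.
Local Open Scope ring_scope.

Section Defs.
Variable R : realFieldType.

(* Symmetric tridiagonal n x n matrix, with 1-based data:
   diagonal entry (i,i) = d i, off-diagonal entry (i,i+1)=(i+1,i) = o i. *)
Definition tridiag (n : nat) (d o : nat -> R) : 'M[R]_n :=
  \matrix_(i < n, j < n)
    if i == j :> nat then d i.+1
    else if j == i.+1 :> nat then o i.+1
    else if i == j.+1 :> nat then o j.+1
    else 0.

(* A_n^{(a,b)}(alpha,beta1,beta2): diagonal (alpha+a, alpha, ..., alpha, alpha+b),
   off-diagonal (i,i+1) entries beta1 for i odd, beta2 for i even (1-based). *)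
Definition Amat (n : nat) (a b alpha beta1 beta2 : R) : 'M[R]_n :=
  tridiag n
    (fun i => alpha + (if i == 1%N then a else 0) + (if i == n then b else 0))
    (fun i => if odd i then beta1 else beta2).

Definition alpha_ (s1 s2 : R) : R := s1^-1 + s2^-1.
Definition beta1_ (s1 : R) : R := - s1^-1.
Definition beta2_ (s2 : R) : R := - s2^-1.
Definition eta_ (s2 : R) : R := 2 / s2.

Definition defect_cap (m : nat) (s1 s2 : R) : 'M[R]_(4 * m + 1) :=
  tridiag (4 * m + 1)
    (fun i => if (i == 1%N) || (i == 4 * m + 1)%N then s1^-1
              else if i == (2 * m + 1)%N then eta_ s2
              else alpha_ s1 s2)
    (fun i => if (i <= 2 * m)%N then
                (if odd i then beta1_ s1 else beta2_ s2)
              else (if odd i then beta2_ s2 else beta1_ s1)).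

Fixpoint chebU (t : R) (k : nat) : R :=
  match k with
  | 0 => 1
  | 1 => 2 * t
  | (k'.+1 as k1).+1 => 2 * t * chebU t k1 - chebU t k'
  end.

Definition Pstar (alpha beta1 beta2 : R) (k : nat) (x : R) : R :=
  (beta1 * beta2) ^+ k *
  chebU (((x - alpha) ^+ 2 - beta1 ^+ 2 - beta2 ^+ 2) / (2 * beta1 * beta2)) k.

Definition chi (n : nat) (M : 'M[R]_n) (x : R) : R := \det (x%:M - M).

End Defs.


(* The characteristic polynomial of a symmetric tridiagonal matrix is the
   continuant of its entries: it obeys the three-term recurrence of the
   determinant and splits at any index p into a product of the continuants of
   the two blocks, corrected by the coupling o_p^2.  Splitting the defect matrix
   just after its centre resonator gives the second identity.  Perturbing the two
   end diagonal entries of a continuant is bilinear in the perturbations, and for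
   constant diagonal z and alternating off-diagonal entries the odd and even
   continuants are z P*_k and P*_(k+1) + beta2^2 P*_k, because P*_k satisfies
   P*_(k+2) = (z^2 - beta1^2 - beta2^2) P*_(k+1) - (beta1 beta2)^2 P*_k.
   Rewriting every factor in this way yields the first and third identities. *)

From HB Require Import structures.
From mathcomp Require Import all_boot all_order all_algebra.
From mathcomp Require Import zify ring.
Set Implicit Arguments. Unset Strict Implicit. Unset Printing Implicit Defensive.
Import Order.TTheory GRing.Theory Num.Theory.
Local Open Scope ring_scope.

Lemma nat_ind2 (P : nat -> Prop) :
  P 0%N -> P 1%N -> (forall n, P n -> P n.+1 -> P n.+2) -> forall n, P n.
Proof.
move=> P0 P1 PSS n; suff: P n /\ P n.+1 by case.
by elim: n => [|n [Pn PSn]]; split; last exact: PSS.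
Qed.

Section Continuant.
Variable R : comPzRingType.
Implicit Types d o : nat -> R.

(* Indices are 1-based as in [tridiag]: [continuant d o n] is the determinant
   with diagonal d_1..d_n and off-diagonal o_1..o_(n-1). *)
Fixpoint continuant d o n : R :=
  match n with
  | 0 => 1
  | 1 => d 1%N
  | (k.+1 as n1).+1 => d n1.+1 * continuant d o n1 - o n1 ^+ 2 * continuant d o k
  end.

Lemma continuantSS d o n :
  continuant d o n.+2 = d n.+2 * continuant d o n.+1 - o n.+1 ^+ 2 * continuant d o n.
Proof. by []. Qed.

Lemma continuant_ext d o d' o' n :
  (forall i, (0 < i <= n)%N -> d i = d' i) ->
  (forall i, (0 < i < n)%N -> o i ^+ 2 = o' i ^+ 2) ->
  continuant d o n = continuant d' o' n.
Proof.
move=> eq_d eq_o; suff: forall j, (j <= n)%N -> continuant d o j = continuant d' o' j by apply.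
elim/nat_ind2 => [||j IHj IHSj] le_jn; [by [] | by apply: eq_d; lia |].
by rewrite !continuantSS IHj ?IHSj ?eq_d ?eq_o //; lia.
Qed.

Lemma continuant0 d o : continuant d o 0 = 1.
Proof. by []. Qed.

Lemma continuant1 d o : continuant d o 1 = d 1%N.
Proof. by []. Qed.

Lemma continuant_split d o p q : (0 < p)%N ->
  continuant d o (p + q.+1) =
    continuant d o p * continuant (fun i => d (p + i)%N) (fun i => o (p + i)%N) q.+1
    - o p ^+ 2 * continuant d o p.-1
      * continuant (fun i => d (p.+1 + i)%N) (fun i => o (p.+1 + i)%N) q.
Proof.
case: p => // p _; rewrite [p.+1.-1]/=; elim/nat_ind2: q => [||q IHq IHSq].
- by rewrite addn1 continuantSS !continuant1 continuant0 addn1 mulr1 mulrC.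
- rewrite addn2 !continuantSS !continuant1 continuant0; cbv beta.
  rewrite !addSn !addnS !addn0; ring.
have -> : (p.+1 + q.+3 = (p.+1 + q.+1).+2)%N by rewrite !addnS.
rewrite continuantSS -addnS IHSq -addnS IHq !continuantSS; cbv beta.
rewrite !addSn !addnS; ring.
Qed.

Lemma continuant_perturb_first d o a n :
  continuant (fun i => d i - (if i == 1%N then a else 0)) o n.+1
  = continuant d o n.+1 - a * continuant (fun i => d i.+1) (fun i => o i.+1) n.
Proof.
elim/nat_ind2: n => [||n IHn IHSn].
- by rewrite !continuant1 continuant0 mulr1.
- by rewrite !continuantSS !continuant1 continuant0 /= subr0 mulr1; ring.
by rewrite continuantSS IHSn IHn subr0 !continuantSS; ring.
Qed.

Lemma continuant_perturb_last d o b n :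
  continuant (fun i => d i - (if i == n.+1 then b else 0)) o n.+1
  = continuant d o n.+1 - b * continuant d o n.
Proof.
case: n => [|n]; first by rewrite !continuant1 continuant0 mulr1.
have unperturbed k : (k <= n.+1)%N ->
    continuant (fun i => d i - (if i == n.+2 then b else 0)) o k = continuant d o k.
  move=> le_kn; apply: continuant_ext => // i /andP[_ le_ik].
  by rewrite ltn_eqF ?subr0 //; lia.
by rewrite !continuantSS eqxx !unperturbed //; ring.
Qed.

Lemma continuant_perturb_ends d o a b n :
  continuant (fun i => d i - (if i == 1%N then a else 0) - (if i == n.+2 then b else 0)) o n.+2
  = continuant d o n.+2 - a * continuant (fun i => d i.+1) (fun i => o i.+1) n.+1
    - b * continuant d o n.+1 + a * b * continuant (fun i => d i.+1) (fun i => o i.+1) n.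
Proof.
rewrite (continuant_perturb_last (fun i => d i - (if i == 1%N then a else 0))).
by rewrite !continuant_perturb_first; ring.
Qed.

Definition alternating (c1 c2 : R) (i : nat) : R := if odd i then c1 else c2.

Lemma alternatingS c1 c2 i : alternating c1 c2 i.+1 = alternating c2 c1 i.
Proof. by rewrite /alternating /=; case: odd. Qed.

Lemma continuant_const_alternating (z c1 c2 : R) (Q : nat -> R) :
  Q 0%N = 1 -> Q 1%N = z ^+ 2 - c1 ^+ 2 - c2 ^+ 2 ->
  (forall k, Q k.+2 = (z ^+ 2 - c1 ^+ 2 - c2 ^+ 2) * Q k.+1 - (c1 * c2) ^+ 2 * Q k) ->
  forall k, continuant (fun=> z) (alternating c1 c2) k.*2.+1 = z * Q k
         /\ continuant (fun=> z) (alternating c1 c2) k.+1.*2 = Q k.+1 + c2 ^+ 2 * Q k.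
Proof.
move=> Q0 Q1 QSS; elim=> [|k [K_odd K_even]].
  by rewrite continuantSS !continuant1 continuant0 Q0 Q1 /alternating /=; split; ring.
have K_odd' : continuant (fun=> z) (alternating c1 c2) k.+1.*2.+1 = z * Q k.+1.
  by rewrite doubleS continuantSS -doubleS K_even K_odd /alternating odd_double; ring.
split=> //; rewrite doubleS continuantSS K_odd' K_even QSS.
by rewrite /alternating /= odd_double /=; ring.
Qed.
End Continuant.

Lemma bump_lt h i : (i < h)%N -> bump h i = i.
Proof. by rewrite /bump; case: leqP. Qed.

Lemma bump_ge h i : (h <= i)%N -> bump h i = i.+1.
Proof. by rewrite /bump => ->. Qed.

Section Tridiagonal.
Variable R : realFieldType.
Implicit Types d o : nat -> R.

Lemma tridiag_minor_last n d o :
  row' ord_max (col' ord_max (tridiag n.+1 d o)) = tridiag n d o.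
Proof. by apply/matrixP => i j; rewrite !mxE /= !bump_lt. Qed.

Lemma det_tridiag_minor_subdiag n d o :
  \det (row' ord_max (col' (widen_ord (leqnSn n.+1) ord_max) (tridiag n.+2 d o)))
  = o n.+1 * \det (tridiag n d o).
Proof.
rewrite (expand_det_col _ ord_max) big_ord_recr /= big1 ?add0r; last first.
  move=> i _; rewrite !mxE /= bump_lt ?bump_ge //; have := ltn_ord i; last lia.
  by move=> lt_in; rewrite !ifF ?mul0r //; apply/negbTE/eqP; lia.
rewrite !mxE /= bump_lt // bump_ge // eqxx ifF; last by apply/negbTE/eqP; lia.
congr (_ * _); rewrite /cofactor -signr_odd addnn odd_double expr0 mul1r.
congr (\det _); apply/matrixP => i j; rewrite !mxE /=.
have lt_in : (i < n)%N := ltn_ord i; have lt_jn : (j < n)%N := ltn_ord j.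
by rewrite !bump_lt // ltnW.
Qed.

Lemma det_tridiagSS n d o :
  \det (tridiag n.+2 d o)
  = d n.+2 * \det (tridiag n.+1 d o) - o n.+1 ^+ 2 * \det (tridiag n d o).
Proof.
rewrite (expand_det_row _ ord_max) !big_ord_recr /= big1 ?add0r; last first.
  move=> j _; have := ltn_ord j; rewrite !mxE /= => lt_jn.
  by rewrite !ifF ?mul0r //; apply/negbTE/eqP; lia.
rewrite !mxE /= eqxx !ifF; try by apply/negbTE/eqP; lia.
rewrite /cofactor det_tridiag_minor_subdiag tridiag_minor_last.
have sign_odd : (-1) ^+ (n.+1 + n) = -1 :> R.
  by rewrite -signr_odd addSn addnn /= odd_double.
have sign_even : (-1) ^+ (n.+1 + n.+1) = 1 :> R.
  by rewrite -signr_odd addnn odd_double.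
rewrite sign_odd sign_even; ring.
Qed.

Lemma det_tridiag n d o : \det (tridiag n d o) = continuant d o n.
Proof.
elim/nat_ind2: n => [||n IHn IHSn]; first by rewrite det_mx00.
  by rewrite det_mx11 mxE.
by rewrite det_tridiagSS IHn IHSn.
Qed.

Lemma chi_tridiag n d o x : chi (tridiag n d o) x = continuant (fun i => x - d i) o n.
Proof.
rewrite (@continuant_ext _ _ o (fun i => x - d i) (fun i => - o i)) //; last first.
  by move=> i _; rewrite sqrrN.
rewrite /chi -det_tridiag; congr (\det _); apply/matrixP => i j; rewrite !mxE.
case: (i =P j) => [->|/eqP ne_ij]; first by rewrite eqxx mulr1n.
have -> : (i == j :> nat) = false by exact: negbTE.
rewrite mulr0n sub0r.
by case: ifP => _ //; case: ifP => _ //; rewrite oppr0.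
Qed.

Lemma chi_Amat n (aa bb a c1 c2 x : R) :
  let K := continuant (fun=> x - a) (alternating c1 c2) in
  let K' := continuant (fun=> x - a) (alternating c2 c1) in
  chi (Amat n.+2 aa bb a c1 c2) x
  = K n.+2 - aa * K' n.+1 - bb * K n.+1 + aa * bb * K' n.
Proof.
move=> K K'; rewrite /Amat chi_tridiag.
rewrite (@continuant_ext _ _ _ (fun i => x - a - (if i == 1%N then aa else 0)
    - (if i == n.+2 then bb else 0)) (alternating c1 c2)) //; last first.
  by move=> i _; ring.
rewrite continuant_perturb_ends.
(* Dropping the first index swaps the roles of [c1] and [c2]. *)
have shift k : continuant (fun=> x - a) (fun i => alternating c1 c2 i.+1) k = K' k.
  by apply: continuant_ext => // i _; rewrite alternatingS.
by rewrite !shift.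
Qed.
End Tridiagonal.

Section ChebyshevContinuants.
Variables (R : realFieldType) (a c1 c2 x : R).
Hypotheses (c1_neq0 : c1 != 0) (c2_neq0 : c2 != 0).

Let z := x - a.
Let Q k := Pstar a c1 c2 k x.

Lemma PstarC k : Pstar a c1 c2 k x = Pstar a c2 c1 k x.
Proof.
rewrite /Pstar; congr (_ * chebU _ _); first by rewrite mulrC.
by congr (_ / _); ring.
Qed.

Lemma Pstar_rec :
  [/\ Q 0%N = 1, Q 1%N = z ^+ 2 - c1 ^+ 2 - c2 ^+ 2
    & forall k, Q k.+2 = (z ^+ 2 - c1 ^+ 2 - c2 ^+ 2) * Q k.+1 - (c1 * c2) ^+ 2 * Q k].
Proof.
have two_neq0 : (2 : R) != 0 by rewrite pnatr_eq0.
set t := (z ^+ 2 - c1 ^+ 2 - c2 ^+ 2) / (2 * c1 * c2).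
have c12t : c1 * c2 * (2 * t) = z ^+ 2 - c1 ^+ 2 - c2 ^+ 2.
  by rewrite /t; field; rewrite c1_neq0 c2_neq0.
split; first by rewrite /Q /Pstar expr0 mul1r.
  by rewrite /Q /Pstar /= expr1 -/z -/t c12t.
by move=> k; rewrite /Q /Pstar /= -/z -/t -c12t !exprS; ring.
Qed.

Lemma continuant_alternating_odd k :
  continuant (fun=> z) (alternating c1 c2) k.*2.+1 = z * Q k.
Proof.
by have [Q0 Q1 QSS] := Pstar_rec; case: (continuant_const_alternating Q0 Q1 QSS k).
Qed.

Lemma continuant_alternating_even k :
  continuant (fun=> z) (alternating c1 c2) k.+1.*2 = Q k.+1 + c2 ^+ 2 * Q k.
Proof.
by have [Q0 Q1 QSS] := Pstar_rec; case: (continuant_const_alternating Q0 Q1 QSS k).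
Qed.
End ChebyshevContinuants.

Section ChebyshevAmat.
Variables (R : realFieldType) (a c1 c2 x : R).
Hypotheses (c1_neq0 : c1 != 0) (c2_neq0 : c2 != 0).

Let z := x - a.
Let Q k := Pstar a c1 c2 k x.

Lemma chi_Amat_odd k aa bb :
  chi (Amat k.+1.*2.+1 aa bb a c1 c2) x
  = (z - aa - bb) * Q k.+1 - (aa * c1 ^+ 2 + bb * c2 ^+ 2 - aa * bb * z) * Q k.
Proof.
rewrite doubleS chi_Amat -/z -doubleS.
rewrite !continuant_alternating_odd // !continuant_alternating_even //.
by rewrite !(PstarC _ c2 c1) /z /Q; ring.
Qed.

Lemma chi_Amat_even_last k bb :
  chi (Amat k.+1.*2 0 bb a c1 c2) x = Q k.+1 + (c2 ^+ 2 - bb * z) * Q k.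
Proof.
rewrite doubleS chi_Amat -/z -doubleS.
by rewrite !continuant_alternating_odd // continuant_alternating_even // /z /Q; ring.
Qed.

Lemma chi_Amat_even_first k aa :
  chi (Amat k.+1.*2 aa 0 a c1 c2) x = Q k.+1 + (c2 ^+ 2 - aa * z) * Q k.
Proof.
rewrite doubleS chi_Amat -/z -doubleS mulr0 mul0r addr0.
rewrite !continuant_alternating_odd // continuant_alternating_even //.
by rewrite (PstarC _ c2 c1) /z /Q; ring.
Qed.
End ChebyshevAmat.

Ltac case_nat_tests :=
  repeat (first [case: eqP | case: leqP] => ? /=; try (exfalso; lia)).

Lemma chi_defect_cap (R : realFieldType) (s1 s2 x : R) m : (0 < m)%N ->
  let a := alpha_ s1 s2 in let b1 := beta1_ s1 in let b2 := beta2_ s2 in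
  chi (defect_cap m s1 s2) x =
  chi (Amat (2 * m + 1) b2 (b1 - b2) a b1 b2) x * chi (Amat (2 * m) 0 b2 a b1 b2) x
  - b2 ^+ 2 * chi (Amat (2 * m) b2 0 a b1 b2) x * chi (Amat (2 * m - 1) 0 b2 a b2 b1) x.
Proof.
move=> m_gt0 a b1 b2; rewrite /defect_cap /Amat !chi_tridiag.
have -> : (4 * m + 1 = (2 * m + 1) + (2 * m - 1).+1)%N by lia.
rewrite continuant_split ?addn1 //.
have -> : ((2 * m - 1).+1 = 2 * m)%N by lia.
rewrite /a /b1 /b2 /alpha_ /beta1_ /beta2_ /eta_.
congr (_ * _ - _ * _ * _);
  try (apply: continuant_ext => i i_range; first by case_nat_tests; ring).
- by case_nat_tests.
- by rewrite addSn /= oddD oddM /=; case_nat_tests; case: odd.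
- by rewrite ltnn /= oddM.
- by case_nat_tests.
by rewrite !addSn /= oddD oddM /= negbK; case_nat_tests.
Qed.

Theorem mainTheorem3 (R : realFieldType) (s1 s2 : R) (m : nat) :
  0 < s1 -> s1 < s2 -> (2 <= m)%N ->
  let a := alpha_ s1 s2 in
  let b1 := beta1_ s1 in
  let b2 := beta2_ s2 in
  let C := defect_cap m s1 s2 in
  (forall x : R,
     let z := x - a in
     chi C x =
     chi (Amat (2 * m) b2 0 a b1 b2) x *
     (((z - b1) * Pstar a b1 b2 m x
       + (b2 * (b1 - b2) * z - b2 * b1 ^+ 2 - (b1 - b2) * b2 ^+ 2)
         * Pstar a b1 b2 m.-1 x)
      - b2 ^+ 2 * ((z - b2) * Pstar a b1 b2 m.-1 x
                   - b2 * b1 ^+ 2 * Pstar a b1 b2 m.-2 x)))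
  /\
  (forall x : R,
     chi C x =
     chi (Amat (2 * m + 1) b2 (b1 - b2) a b1 b2) x
       * chi (Amat (2 * m) 0 b2 a b1 b2) x
     - b2 ^+ 2 * chi (Amat (2 * m) b2 0 a b1 b2) x
               * chi (Amat (2 * m - 1) 0 b2 a b2 b1) x)
  /\
  (forall x : R,
     chi (Amat (2 * m) 0 b2 a b1 b2) x = chi (Amat (2 * m) b2 0 a b1 b2) x).
Proof.
move=> s1_gt0 lt_s12 m_ge2 a b1 b2 C.
have b1_neq0 : b1 != 0 by rewrite oppr_eq0 invr_eq0 gt_eqF.
have b2_neq0 : b2 != 0 by rewrite oppr_eq0 invr_eq0 gt_eqF // (lt_trans s1_gt0).
have splitC (x : R) := chi_defect_cap s1 s2 x (ltnW m_ge2).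
have mirror (x : R) : chi (Amat (2 * m) 0 b2 a b1 b2) x = chi (Amat (2 * m) b2 0 a b1 b2) x.
  case: m m_ge2 {C splitC} => [|k] // _.
  by rewrite mul2n chi_Amat_even_last // chi_Amat_even_first.
split; last by split.
move=> x z; rewrite splitC mirror; case: m m_ge2 {C splitC mirror} => [|[|k]] // _.
rewrite /= !mul2n addn1 subn1 /= !chi_Amat_odd // !(PstarC _ (beta2_ s2)).
by rewrite /z /a /b1 /b2; ring.
Qed.
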